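(* Suppose $\|\nabla f(w;z)\|\le G$ for all $w\in\mathcal{K}$, $z\in\Omega$. Let $T\in\mathbb{N}$ and $K=\tau_{\mathrm{mix}}\lceil2\log_2T\rceil$. For $N\in\mathbb{N}$ let $g_t^N=\frac1N\sum_{i=1}^N\nabla f(w_t;z_t^{(i)})$. Then for every $N\in\{1,\dots,T\}$ and every $\mathcal{F}_{t-1}$-measurable $w_t\in\mathcal{K}$, \[ \mathbb{E}\big[\|g_t^N-\nabla F(w_t)\|\big]\le\tilde{\mathcal{O}}\Big(G\sqrt{\tfrac KN}\Big) \quad\text{and}\quad \mathbb{E}\big[\|g_t^N-\nabla F(w_t)\|^2\big]\le\tilde{\mathcal{O}}\Big(\tfrac{G^2K}{N}\Big). \]
   Context: Let $\Omega$ be a finite set and $(z_k)_{k\ge1}$ an ergodic time-homogeneous Markov chain on $\Omega$ (arbitrary initial distribution) with stationary distribution $\mu$. For probability measures $P,Q$ on $\Omega$, $\|P-Q\|_{TV}=\sup_A|P(A)-Q(A)|$; $P^s(z,\cdot)$ is the law of $z_{s+1}$ given $z_1=z$, $d_{\mathrm{mix}}(s)=\sup_z\|P^s(z,\cdot)-\mu\|_{TV}$, and $\tau_{\mathrm{mix}}=\inf\{s:d_{\mathrm{mix}}(s)\le1/4\}$. $\mathcal{K}\subseteq\mathbb{R}^d$; $f(\cdot;z)$ is differentiable and $F(w)=\mathbb{E}_{z\sim\mu}[f(w;z)]$. Samples are grouped by iterations: positive integers $N_1,N_2,\dots$ are drawn independently of the chain (each $N_s=2^{J_s}$ with $\mathbb{P}(J_s=j)=2^{-j}$,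 $j\ge1$, independently), and $z_t^{(i)}=z_{S_{t-1}+i}$ for $i\ge1$, where $S_{t-1}=N_1+\dots+N_{t-1}$. $\mathcal{F}_{t-1}$ is the $\sigma$-field generated by $N_1,\dots,N_{t-1}$ and the samples $z_s^{(i)}$, $s\le t-1$, $i\le N_s$. The notation $\tilde{\mathcal{O}}(X)$ means a quantity bounded by $c\cdot X$ times a factor polylogarithmic in $T$, $K$ and $N$, with $c$ an absolute constant. *)

From mathcomp Require Import all_boot all_order all_algebra.
From mathcomp Require Import all_classical all_reals all_analysis.
Import Order.TTheory GRing.Theory Num.Theory.
Import numFieldNormedType.Exports.
Set Implicit Arguments. Unset Strict Implicit. Unset Printing Implicit Defensive.
Local Open Scope ring_scope.

Section Defs.
Variable R : realType.

Definition enorm (d : nat) (v : 'rV[R]_d) : R := Num.sqrt (\sum_(i < d) v ord0 i ^+ 2).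

Definition grad (d : nat) (h : 'rV[R]_d -> R) (w : 'rV[R]_d) : 'rV[R]_d :=
  \row_(i < d) derive h w (delta_mx ord0 i).

Variable Omega : finType.

Definition is_distr (p : Omega -> R) : Prop :=
  (forall x, 0 <= p x) /\ \sum_x p x = 1.

Definition is_stochastic (P : Omega -> Omega -> R) : Prop :=
  forall x, is_distr (P x).

Fixpoint Ppow (P : Omega -> Omega -> R) (s : nat) : Omega -> Omega -> R :=
  match s with
  | 0 => fun x y => if x == y then 1 else 0
  | s'.+1 => fun x y => \sum_u Ppow P s' x u * P u y
  end.

Definition irreducible (P : Omega -> Omega -> R) : Prop :=
  forall x y, exists s, 0 < Ppow P s x y.

Definition aperiodic (P : Omega -> Omega -> R) : Prop :=
  forall x (p : nat), (forall n, (0 < n)%N -> 0 < Ppow P n x x -> (p %| n)%N) -> p = 1%N.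

Definition ergodic (P : Omega -> Omega -> R) : Prop :=
  is_stochastic P /\ irreducible P /\ aperiodic P.

Definition is_stationary (P : Omega -> Omega -> R) (mu : Omega -> R) : Prop :=
  is_distr mu /\ forall y, \sum_x mu x * P x y = mu y.

Definition tv_dist (p q : Omega -> R) : R :=
  \big[Num.max/0]_(A : {set Omega}) `|\sum_(x in A) p x - \sum_(x in A) q x|.

Definition d_mix (P : Omega -> Omega -> R) (mu : Omega -> R) (s : nat) : R :=
  \big[Num.max/0]_(z : Omega) tv_dist (Ppow P s z) mu.

Definition is_tau_mix (P : Omega -> Omega -> R) (mu : Omega -> R) (tau : nat) : Prop :=
  d_mix P mu tau <= 4^-1 /\ forall s, (s < tau)%N -> 4^-1 < d_mix P mu s.

Definition path_prob (p0 : Omega -> R) (P : Omega -> Omega -> R) (L : nat)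
  (z : {ffun 'I_L -> Omega}) : R :=
  match L return {ffun 'I_L -> Omega} -> R with
  | 0 => fun _ => 1
  | L'.+1 => fun z =>
      p0 (z ord0) * \prod_(k < L') P (z (widen_ord (leqnSn L') k)) (z (lift ord0 k))
  end z.

(** Realisation of N_1, ..., N_m from J_s = j_s + 1 (j_s : nat), N_s = 2^J_s *)
Definition Ns (m : nat) (j : {ffun 'I_m -> nat}) : seq nat :=
  [seq (2 ^ (j s).+1)%N | s <- enum 'I_m].

Definition Nprob (m : nat) (j : {ffun 'I_m -> nat}) : R :=
  \prod_(s < m) (2 ^+ (j s).+1)^-1.

Definition Ssum (m : nat) (j : {ffun 'I_m -> nat}) : nat := sumn (Ns j).

(** E[ X ] where X depends on N_1..N_m and the first L(j) states of the chain. *)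
Definition expect (p0 : Omega -> R) (P : Omega -> Omega -> R) (m : nat)
  (L : {ffun 'I_m -> nat} -> nat)
  (X : forall j : {ffun 'I_m -> nat}, {ffun 'I_(L j) -> Omega} -> R) : \bar R :=
  \esum_(j in [set: {ffun 'I_m -> nat}])
     (Nprob j * \sum_(z : {ffun 'I_(L j) -> Omega}) path_prob p0 P z * X j z)%:E.

End Defs.

Section Iterate.
Variables (R : realType) (Omega : finType) (d : nat).

Definition Fobj (mu : Omega -> R) (f : Omega -> 'rV[R]_d -> R) (w : 'rV[R]_d) : R :=
  \sum_z mu z * f z w.

(** w_t = W(N_1..N_{t-1}, z_1..z_{S_{t-1}}) : an F_{t-1}-measurable iterate *)
Definition w_t (m : nat) (W : seq nat -> seq Omega -> 'rV[R]_d)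
  (j : {ffun 'I_m -> nat}) (L : nat) (z : {ffun 'I_L -> Omega}) : 'rV[R]_d :=
  W (Ns j) (take (Ssum j) (val (fgraph z))).

Definition g_tN (f : Omega -> 'rV[R]_d -> R) (m : nat) (W : seq nat -> seq Omega -> 'rV[R]_d)
  (N : nat) (j : {ffun 'I_m -> nat}) (L : nat) (z : {ffun 'I_L -> Omega}) : 'rV[R]_d :=
  (N%:R)^-1 *: \sum_(x <- drop (Ssum j) (val (fgraph z))) grad (f x) (w_t W j z).

End Iterate.

Arguments expect {R Omega} p0 P m L X.

From mathcomp Require Import all_boot all_order all_algebra.
From mathcomp Require Import all_classical all_reals all_analysis.
Import Order.TTheory GRing.Theory Num.Theory.
Import numFieldNormedType.Exports.
From mathcomp Require Import ring lra.
Local Open Scope ring_scope.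
Set Implicit Arguments. Unset Strict Implicit. Unset Printing Implicit Defensive.

(* Given the past, the N samples of round t are a run of the chain started from
   some law q, while w_t is frozen.  With a x = grad f(w_t; x) and the mu-centred
   h x = a x - grad F(w_t), the squared error is N^-2 sum_(i,j) <h z_i, h z_j>.
   As <h x, .> has mu-mean zero, the expectation of the (i, i+k) term is at most
   4 G^2 times the l1 distance from P^k(x, .) to mu; that distance is
   submultiplicative in k and at most 1/2 at k = tau, so it sums to at most
   4 tau.  Hence E||g - grad F||^2 <= 32 G^2 tau / N; the first moment follows by
   Jensen, and tau <= K, so c = 32 works without any logarithmic factor. *)

Section MarkovChain.
Variables (R : realType) (Omega : finType) (P : Omega -> Omega -> R).
Hypothesis Pst : is_stochastic P.

Lemma Ppow_add s t x y : Ppow P (s + t) x y = \sum_u Ppow P s x u * Ppow P t u y.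
Proof.
elim: t y => [|t IH] y /=.
  rewrite addn0 (bigD1 y) //= eqxx mulr1 big1 ?addr0 // => u /negbTE ->.
  by rewrite mulr0.
rewrite addnS /=; under eq_bigr do rewrite IH mulr_suml.
rewrite exchange_big /=; apply: eq_bigr => u _.
by rewrite mulr_sumr; apply: eq_bigr => v _; rewrite mulrA.
Qed.

Lemma Ppow1 x y : Ppow P 1 x y = P x y.
Proof.
rewrite /= (bigD1 x) //= eqxx mul1r big1 ?addr0 // => u.
by rewrite eq_sym => /negbTE ->; rewrite mul0r.
Qed.

Lemma PpowSl k x y : Ppow P k.+1 x y = \sum_u P x u * Ppow P k u y.
Proof. by rewrite -add1n Ppow_add; under eq_bigr do rewrite Ppow1. Qed.

Lemma Ppow_distr k x : is_distr (Ppow P k x).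
Proof.
elim: k x => [|k IH] x.
  split=> [y|] /=; first by case: eqP.
  by rewrite (bigD1 x) //= eqxx big1 ?addr0 // => u; rewrite eq_sym => /negbTE ->.
split=> [y|] /=.
  apply: sumr_ge0 => u _; apply: mulr_ge0; first by case: (IH x) => + _; apply.
  by case: (Pst u) => + _; apply.
rewrite exchange_big /=.
under eq_bigr do rewrite -mulr_sumr (proj2 (Pst _)) mulr1.
by case: (IH x).
Qed.

Lemma stationary_Ppow mu k y : is_stationary P mu -> \sum_x mu x * Ppow P k x y = mu y.
Proof.
move=> [_ mu_inv]; elim: k y => [|k IH] y /=.
  by rewrite (bigD1 y) //= eqxx mulr1 big1 ?addr0 // => u /negbTE ->; rewrite mulr0.
under eq_bigr do rewrite mulr_sumr.
rewrite exchange_big /= -[RHS]mu_inv; apply: eq_bigr => u _.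
by rewrite -IH mulr_suml; apply: eq_bigr => v _; rewrite mulrA.
Qed.

(* [Echain q n F] is the expectation of [F (z_1 :: ... :: z_n)] when [z_1 ~ q]
   and the z's then follow the chain. *)
Fixpoint Echain (q : Omega -> R) (n : nat) (F : seq Omega -> R) : R :=
  if n is n'.+1 then \sum_x q x * Echain (P x) n' (fun s => F (x :: s)) else F [::].

Lemma eq_Echain q n F G : (forall s, size s = n -> F s = G s) -> Echain q n F = Echain q n G.
Proof.
elim: n q F G => [|n IH] q F G FG /=; first by rewrite FG.
by apply: eq_bigr => x _; congr (_ * _); apply: IH => s s_n; rewrite FG //= s_n.
Qed.

Lemma EchainD q n F G : Echain q n (fun s => F s + G s) = Echain q n F + Echain q n G.
Proof.
elim: n q F G => [|n IH] q F G //=; rewrite -big_split /=.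
by apply: eq_bigr => x _; rewrite IH mulrDr.
Qed.

Lemma EchainZ q n c F : Echain q n (fun s => c * F s) = c * Echain q n F.
Proof.
elim: n q F => [|n IH] q F //=; rewrite mulr_sumr.
by apply: eq_bigr => x _; rewrite IH mulrCA.
Qed.

Lemma Echain_cst q n c : is_distr q -> Echain q n (fun _ => c) = c.
Proof.
elim: n q => [|n IH] q [_ q1] //=.
under eq_bigr do rewrite IH //.
by rewrite -mulr_suml q1 mul1r.
Qed.

Lemma ler_Echain q n F G : (forall x, 0 <= q x) ->
  (forall s, size s = n -> F s <= G s) -> Echain q n F <= Echain q n G.
Proof.
elim: n q F G => [|n IH] q F G q_ge0 FG /=; first exact: FG.
apply: ler_sum => x _; apply: ler_wpM2l => //; apply: IH.
  by case: (Pst x).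
by move=> s s_n; apply: FG; rewrite /= s_n.
Qed.

Lemma Echain_ge0 q n F : is_distr q ->
  (forall s, size s = n -> 0 <= F s) -> 0 <= Echain q n F.
Proof.
move=> q_distr F_ge0; rewrite -(Echain_cst n 0 q_distr).
by apply: ler_Echain => //; case: q_distr.
Qed.

Lemma Echain_sqr_le q n X : is_distr q -> Echain q n X ^+ 2 <= Echain q n (fun s => X s ^+ 2).
Proof.
move=> q_distr; set M := Echain q n X.
have : 0 <= Echain q n (fun s => X s ^+ 2 + ((- 2 * M) * X s + M ^+ 2)).
  apply: Echain_ge0 => // s _.
  by rewrite (_ : _ + _ = (X s - M) ^+ 2) ?sqr_ge0 //; ring.
rewrite !EchainD EchainZ Echain_cst // -/M; lra.
Qed.

Lemma Echain_le_sqr q n X B : is_distr q -> 0 <= B ->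
  Echain q n (fun s => X s ^+ 2) <= B ^+ 2 -> Echain q n X <= B.
Proof.
move=> q_distr B_ge0 XB; have := le_trans (Echain_sqr_le n X q_distr) XB.
by move: B_ge0; set E := Echain _ _ _; nra.
Qed.

Fixpoint next_law (q : Omega -> R) (s : seq Omega) : Omega -> R :=
  if s is x :: s' then next_law (P x) s' else q.

Lemma next_law_distr q s : is_distr q -> is_distr (next_law q s).
Proof. by elim: s q => [|x s IH] q //= _; apply: IH. Qed.

Lemma Echain_cat q a b F :
  Echain q (a + b) F = Echain q a (fun s => Echain (next_law q s) b (fun s' => F (s ++ s'))).
Proof. by elim: a q F => [|a IH] q F //=; apply: eq_bigr => x _; rewrite IH. Qed.

Lemma Echain_sum q n (phi : Omega -> R) : is_distr q ->
  Echain q n (fun s => \sum_(y <- s) phi y) =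
  \sum_(k < n) \sum_y (\sum_x q x * Ppow P k x y) * phi y.
Proof.
elim: n q => [|n IH] q q_distr /=; first by rewrite big_nil big_ord0.
under eq_bigr => x _.
  rewrite (@eq_Echain _ n _ (fun s => phi x + \sum_(y <- s) phi y)); last first.
    by move=> s _; rewrite big_cons.
  rewrite EchainD Echain_cst // IH // mulrDr.
  over.
rewrite big_split big_ord_recl /=; congr (_ + _).
  apply: eq_bigr => y _; rewrite mulr_suml (bigD1 y) //= eqxx mulr1 big1 ?addr0 //.
  by move=> u /negbTE ->; rewrite mulr0 mul0r.
under eq_bigr do rewrite mulr_sumr.
rewrite exchange_big /=; apply: eq_bigr => k _.
have PpowSr x y : \sum_u Ppow P k x u * P u y = Ppow P k.+1 x y by [].
rewrite add0n; under [RHS]eq_bigr do under eq_bigr do rewrite PpowSr PpowSl.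
under eq_bigr do rewrite mulr_sumr.
rewrite exchange_big /=; apply: eq_bigr => y _.
by rewrite mulr_suml; apply: eq_bigr => x _; rewrite mulrA.
Qed.

End MarkovChain.

Section FinitePaths.
Variable T : finType.

Definition fcons n (x : T) (z : {ffun 'I_n -> T}) : {ffun 'I_n.+1 -> T} :=
  [ffun i => if unlift ord0 i is Some j then z j else x].

Lemma fcons0 n x (z : {ffun 'I_n -> T}) : fcons x z ord0 = x.
Proof. by rewrite ffunE unlift_none. Qed.

Lemma fconsS n x (z : {ffun 'I_n -> T}) j : fcons x z (lift ord0 j) = z j.
Proof. by rewrite ffunE liftK. Qed.

Lemma fgraph_fcons n x (z : {ffun 'I_n -> T}) :
  val (fgraph (fcons x z)) = x :: val (fgraph z).
Proof.
change (tval (fgraph (fcons x z)) = x :: tval (fgraph z)).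
rewrite -!codom_ffun !codomE enum_ordSl /= fcons0 -map_comp; congr (_ :: _).
by apply: eq_map => j /=; rewrite fconsS.
Qed.

Lemma sum_ffunS (V : nmodType) n (F : {ffun 'I_n.+1 -> T} -> V) :
  \sum_(z : {ffun 'I_n.+1 -> T}) F z = \sum_x \sum_(z : {ffun 'I_n -> T}) F (fcons x z).
Proof.
rewrite pair_big /= (reindex (fun p : T * {ffun 'I_n -> T} => fcons p.1 p.2)) //.
exists (fun z : {ffun 'I_n.+1 -> T} => (z ord0, [ffun j : 'I_n => z (lift ord0 j)])).
  by move=> [x z] _ /=; rewrite fcons0; congr (_, _); apply/ffunP => j; rewrite ffunE fconsS.
move=> z _ /=.
apply/ffunP => i; rewrite ffunE; case: (unliftP ord0 i) => [j ->|->] //.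
by rewrite ffunE.
Qed.

Lemma sum_ffun0 (V : nmodType) (F : {ffun 'I_0 -> T} -> V) (z0 : {ffun 'I_0 -> T}) :
  \sum_(z : {ffun 'I_0 -> T}) F z = F z0.
Proof.
rewrite (bigD1 z0) //= big1 ?addr0 // => z /eqP[].
by apply/ffunP => -[].
Qed.

Lemma fgraph_ffun0 (z : {ffun 'I_0 -> T}) : val (fgraph z) = [::].
Proof. by rewrite -[val _]/(tval _) -codom_ffun codomE enum_ord0. Qed.

End FinitePaths.

Section PathProbability.
Variables (R : realType) (Omega : finType) (P : Omega -> Omega -> R).

Lemma path_prob_fcons q n x (z : {ffun 'I_n -> Omega}) :
  path_prob q P (fcons x z) = q x * path_prob (P x) P z.
Proof.
case: n z => [|n] z; rewrite /path_prob; cbv beta iota.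
  by rewrite !big_ord0 !mulr1 fcons0.
rewrite big_ord_recl (_ : widen_ord _ ord0 = ord0); last exact: val_inj.
rewrite !fcons0 fconsS; congr (_ * (_ * _)); apply: eq_bigr => k _.
rewrite (_ : widen_ord _ (lift ord0 k) = lift ord0 (widen_ord (leqnSn n) k)) ?fconsS //.
exact: val_inj.
Qed.

Lemma sum_path_probE q n (F : seq Omega -> R) :
  \sum_(z : {ffun 'I_n -> Omega}) path_prob q P z * F (val (fgraph z)) = Echain P q n F.
Proof.
elim: n q F => [|n IH] q F.
  by rewrite (sum_ffun0 _ (@ffun0 _ (fun=> Omega) (card_ord 0))) fgraph_ffun0 /= mul1r.
rewrite sum_ffunS; apply: eq_bigr => x _.
under eq_bigr do rewrite path_prob_fcons fgraph_fcons -mulrA.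
by rewrite -mulr_sumr (IH (P x) (fun s => F (x :: s))).
Qed.

End PathProbability.

Lemma sum_geometric_half_le (R : realType) (a : R) n : 0 <= a ->
  \sum_(k < n) a * 2^-1 ^+ k <= 2 * a.
Proof.
move=> a_ge0; have half_gt0 : (0 : R) < 2^-1 by rewrite invr_gt0.
have := geometric_le_lim n a_ge0 half_gt0; rewrite gtr0_norm // invf_lt1 ?ltr1n //.
move=> /(_ isT); rewrite /series /= big_mkord (_ : 1 - 2^-1 = 2^-1 :> R); last lra.
by rewrite invrK mulrC.
Qed.

Section Mixing.
Variables (R : realType) (Omega : finType) (P : Omega -> Omega -> R) (mu : Omega -> R).
Hypotheses (Pst : is_stochastic P) (mu_stat : is_stationary P mu).

Definition l1_dist (p q : Omega -> R) := \sum_y `|p y - q y|.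

(* [l1_mix k = 2 d_mix(k)] *)
Definition l1_mix k := \big[Num.max/0]_x l1_dist (Ppow P k x) mu.

Lemma l1_mix_ge0 k : 0 <= l1_mix k.
Proof. exact: bigmax_ge_id. Qed.

Lemma l1_dist_le_mix k x : l1_dist (Ppow P k x) mu <= l1_mix k.
Proof. exact: le_bigmax. Qed.

Lemma l1_mix_le2 k : l1_mix k <= 2.
Proof.
apply: bigmax_le => // x _.
apply: le_trans (ler_sum _ (fun y _ => ler_normB _ _)) _.
have [Pk_ge0 Pk1] := Ppow_distr Pst k x; have [[mu_ge0 mu1] _] := mu_stat.
rewrite big_split /= (eq_bigr _ (fun y _ => ger0_norm (Pk_ge0 y))).
by rewrite (eq_bigr _ (fun y _ => ger0_norm (mu_ge0 y))) Pk1 mu1.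
Qed.

(* Stationarity lets one center both factors. *)
Lemma Ppow_add_centered s t x w : Ppow P (s + t) x w - mu w =
  \sum_z (Ppow P s x z - mu z) * (Ppow P t z w - mu w).
Proof.
have [_ Ps1] := Ppow_distr Pst s x; have [[_ mu1] _] := mu_stat.
rewrite Ppow_add; under [RHS]eq_bigr do rewrite mulrBl !mulrBr.
by rewrite !sumrB -!mulr_suml Ps1 mu1 (stationary_Ppow t w mu_stat); ring.
Qed.

Lemma l1_mix_submul s t : l1_mix (s + t) <= l1_mix s * l1_mix t.
Proof.
apply: bigmax_le => [|x _]; first by rewrite mulr_ge0 ?l1_mix_ge0.
rewrite /l1_dist; under eq_bigr do rewrite Ppow_add_centered.
apply: le_trans (ler_sum _ (fun w _ => ler_norm_sum _ _ _)) _.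
rewrite exchange_big /=; under eq_bigr do under eq_bigr do rewrite normrM.
under eq_bigr do rewrite -mulr_sumr.
apply: le_trans (ler_sum _ (fun z _ => ler_wpM2l (normr_ge0 _) (l1_dist_le_mix t z))) _.
by rewrite -mulr_suml ler_wpM2r ?l1_mix_ge0 ?l1_dist_le_mix.
Qed.

Lemma l1_dist_le_tv p q : l1_dist p q <= 2 * tv_dist p q.
Proof.
pose A : {set Omega} := [set y | q y <= p y].
have tvA (B : {set Omega}) : `|\sum_(y in B) p y - \sum_(y in B) q y| <= tv_dist p q.
  exact: le_bigmax.
rewrite /l1_dist (bigID (mem A)) /= mulr2n mulrDl mul1r; apply: lerD.
  apply: le_trans (tvA A); rewrite -sumrB (eq_bigr (fun y => p y - q y)) ?ler_norm // => y.
  by rewrite inE -subr_ge0 => /ger0_norm.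
apply: le_trans (tvA (~: A)); rewrite -sumrB -normrN -sumrN.
rewrite (eq_big (mem (~: A)) (fun y => - (p y - q y))) ?ler_norm // => y; first by rewrite !inE.
by rewrite !inE -ltNge -subr_lt0 => /ltr0_norm.
Qed.

Lemma l1_mix_tau tau : is_tau_mix P mu tau -> l1_mix tau <= 2^-1.
Proof.
move=> [d_tau _]; apply: bigmax_le => // x _; apply: le_trans (l1_dist_le_tv _ _) _.
have tv_tau : tv_dist (Ppow P tau x) mu <= 4^-1.
  by apply: le_trans d_tau; apply: le_bigmax.
by rewrite (_ : 2^-1 = 2 * 4^-1 :> R) ?ler_wpM2l //; field.
Qed.

Section HalfMixing.
Variable tau : nat.
Hypothesis mix_tau : l1_mix tau <= 2^-1.

Lemma l1_mix_geometric j r : l1_mix (j * tau + r) <= 2 * 2^-1 ^+ j.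
Proof.
elim: j => [|j IH]; first by rewrite add0n expr0 mulr1 l1_mix_le2.
rewrite mulSn -addnA; apply: le_trans (l1_mix_submul _ _) _.
by rewrite exprS mulrCA ler_pM ?l1_mix_ge0.
Qed.

Lemma l1_mix_tau0 k : tau = 0%N -> l1_mix k = 0.
Proof.
move=> tau0; have := l1_mix_submul k 0; rewrite addn0 -tau0 => mix_k.
have := ler_wpM2l (l1_mix_ge0 k) mix_tau; have := l1_mix_ge0 k; lra.
Qed.

Lemma sum_l1_mix_le n : \sum_(k < n) l1_mix k <= 4 * tau%:R.
Proof.
case: (posnP tau) => [tau0 | tau_gt0].
  by rewrite big1 ?tau0 ?mulr0 // => k _; apply: l1_mix_tau0.
apply: (@le_trans _ _ (\sum_(0 <= k < n * tau) l1_mix k)).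
  rewrite -(big_mkord xpredT) (big_nat_widen _ _ (n * tau)) ?leq_pmulr //.
  by rewrite big_mkcond /=; apply: ler_sum_nat => k _; case: ifP => // _; apply: l1_mix_ge0.
rewrite big_nat_mul big_mkord.
apply: (@le_trans _ _ (\sum_(j < n) tau%:R * 2 * 2^-1 ^+ j)).
  apply: ler_sum => j _; rewrite mulSn -{1}[(j * tau)%N]add0n big_addn addnK -mulrA.
  apply: (@le_trans _ _ (\sum_(0 <= k < tau) 2 * 2^-1 ^+ j)).
    by apply: ler_sum_nat => k _; rewrite addnC; apply: l1_mix_geometric.
  by rewrite sumr_const_nat subn0 [X in _ <= X]mulr_natl.
apply: le_trans (@sum_geometric_half_le R (tau%:R * 2) n _) _; rewrite ?mulr_ge0 //; lra.
Qed.

End HalfMixing.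
End Mixing.

Section CenteredPairSum.
Variables (R : realType) (Omega : finType) (P : Omega -> Omega -> R) (mu : Omega -> R).
Hypothesis Pst : is_stochastic P.
Variables (kap : Omega -> Omega -> R) (D : R).
Hypothesis D_ge0 : 0 <= D.
Hypothesis kap_centered : forall x, \sum_y mu y * kap x y = 0.
Hypothesis kap_bounded : forall x y, `|kap x y| <= D.

(* [\sum_(i, j) kap s_i s_j] for a symmetric [kap], expanded along the first state. *)
Fixpoint pair_sum (s : seq Omega) : R :=
  if s is x :: s' then kap x x + 2 * \sum_(y <- s') kap x y + pair_sum s' else 0.

Lemma abs_sum_Ppow_kap_le k x : `|\sum_y Ppow P k x y * kap x y| <= D * l1_mix P mu k.
Proof.
rewrite -[X in `|X|]subr0 -{2}(kap_centered x) -sumrB.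
under eq_bigr do rewrite -mulrBl.
apply: le_trans (ler_norm_sum _ _ _) _; under eq_bigr do rewrite normrM.
apply: (@le_trans _ _ (\sum_y `|Ppow P k x y - mu y| * D)).
  by apply: ler_sum => y _; rewrite ler_wpM2l.
by rewrite -mulr_suml mulrC ler_wpM2l ?l1_dist_le_mix.
Qed.

Lemma Echain_sum_kap_le x n :
  Echain P (P x) n (fun s => \sum_(y <- s) kap x y) <= D * \sum_(k < n) l1_mix P mu k.+1.
Proof.
rewrite Echain_sum // mulr_sumr; apply: ler_sum => k _.
under eq_bigr do rewrite -PpowSl.
exact: le_trans (ler_norm _) (abs_sum_Ppow_kap_le _ _).
Qed.

Lemma Echain_pair_sum_le q n : is_distr q ->
  Echain P q n pair_sum <= 2 * D * n%:R * \sum_(k < n) l1_mix P mu k.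
Proof.
elim: n q => [|n IH] q q_distr; first by rewrite /= mulr0 mul0r.
set S := \sum_(k < n.+1) l1_mix P mu k.
have S_ge0 : 0 <= S by apply: sumr_ge0 => k _; apply: l1_mix_ge0.
have S_split : l1_mix P mu 0 + \sum_(k < n) l1_mix P mu k.+1 = S by rewrite [S]big_ord_recl.
have S_n : \sum_(k < n) l1_mix P mu k <= S.
  by rewrite [S]big_ord_recr lerDl l1_mix_ge0.
have step x : Echain P (P x) n (fun s => pair_sum (x :: s)) <= 2 * D * n.+1%:R * S.
  rewrite /= !EchainD EchainZ Echain_cst //.
  have kap_xx : kap x x <= D * l1_mix P mu 0.
    apply: le_trans (ler_norm _) (le_trans _ (abs_sum_Ppow_kap_le 0 x)).
    rewrite (bigD1 x) //= eqxx mul1r big1 ?addr0 // => u.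
    by rewrite eq_sym => /negbTE ->; rewrite mul0r.
  have := Echain_sum_kap_le x n; have := IH _ (Pst x).
  have := ler_wpM2l (mulr_ge0 (mulr_ge0 (ler0n _ 2) D_ge0) (ler0n _ n)) S_n.
  have := mulr_ge0 D_ge0 (l1_mix_ge0 P mu 0); rewrite -[n.+1%:R]natr1 -S_split in S_ge0 *.
  by move: S_ge0 kap_xx; set a := l1_mix P mu 0; set b := \sum_(k < n) _; nra.
apply: (@le_trans _ _ (\sum_x q x * (2 * D * n.+1%:R * S))).
  by apply: ler_sum => x _; apply: ler_wpM2l (step x); case: q_distr.
by rewrite -mulr_suml; case: q_distr => _ ->; rewrite mul1r.
Qed.

End CenteredPairSum.

Section DotProduct.
Variables (R : realType) (d : nat).
Implicit Types u v w : 'rV[R]_d.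

Definition dot u v : R := \sum_i u ord0 i * v ord0 i.

Lemma dotC u v : dot u v = dot v u.
Proof. by apply: eq_bigr => i _; rewrite mulrC. Qed.

Lemma dotDr u v w : dot u (v + w) = dot u v + dot u w.
Proof. by rewrite /dot -big_split; apply: eq_bigr => i _; rewrite mxE mulrDr. Qed.

Lemma dotDl u v w : dot (v + w) u = dot v u + dot w u.
Proof. by rewrite dotC dotDr dotC (dotC w). Qed.

Lemma dotZr u c v : dot u (c *: v) = c * dot u v.
Proof. by rewrite /dot mulr_sumr; apply: eq_bigr => i _; rewrite mxE mulrCA. Qed.

Lemma dotZl u c v : dot (c *: v) u = c * dot v u.
Proof. by rewrite dotC dotZr dotC. Qed.

Lemma dot_sumr (I : Type) (r : seq I) (F : I -> 'rV[R]_d) u :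
  dot u (\sum_(i <- r) F i) = \sum_(i <- r) dot u (F i).
Proof.
rewrite /dot; under eq_bigr do rewrite summxE mulr_sumr.
exact: exchange_big.
Qed.

Lemma enorm_ge0 u : 0 <= enorm u.
Proof. exact: sqrtr_ge0. Qed.

Lemma enorm_sqr u : enorm u ^+ 2 = dot u u.
Proof.
rewrite sqr_sqrtr; last by apply: sumr_ge0 => i _; rewrite sqr_ge0.
by apply: eq_bigr => i _; rewrite expr2.
Qed.

Lemma abs_dot_le u v : `|dot u v| <= (dot u u + dot v v) / 2.
Proof.
apply: le_trans (ler_norm_sum _ _ _) _.
rewrite /dot -big_split /= mulr_suml; apply: ler_sum => i _.
rewrite ler_norml; set a := u ord0 i; set b := v ord0 i.
by apply/andP; split; [have := sqr_ge0 (a + b) | have := sqr_ge0 (a - b)]; nra.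
Qed.

Lemma dot_subr_le u v : dot (u - v) (u - v) <= 2 * dot u u + 2 * dot v v.
Proof.
rewrite /dot !mulr_sumr -big_split /=; apply: ler_sum => i _.
by rewrite !mxE; have := sqr_ge0 (u ord0 i + v ord0 i); nra.
Qed.

Lemma sqr_wmean_le (I : finType) (w t : I -> R) :
  (forall i, 0 <= w i) -> \sum_i w i = 1 ->
  (\sum_i w i * t i) ^+ 2 <= \sum_i w i * t i ^+ 2.
Proof.
move=> w_ge0 w1; set M := \sum_i w i * t i.
have : 0 <= \sum_i w i * (t i - M) ^+ 2 by apply: sumr_ge0 => i _; rewrite mulr_ge0 ?sqr_ge0.
have -> : \sum_i w i * (t i - M) ^+ 2 =
    \sum_i w i * t i ^+ 2 - 2 * M * \sum_i w i * t i + M ^+ 2 * \sum_i w i.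
  rewrite (eq_bigr (fun i => w i * t i ^+ 2 - 2 * M * (w i * t i) + M ^+ 2 * w i)) => [|i _].
    by rewrite big_split sumrB /= -!mulr_sumr.
  by ring.
by rewrite w1 -/M; lra.
Qed.

Lemma dot_wmean_le (I : finType) (w : I -> R) (a : I -> 'rV[R]_d) :
  (forall i, 0 <= w i) -> \sum_i w i = 1 ->
  dot (\sum_i w i *: a i) (\sum_i w i *: a i) <= \sum_i w i * dot (a i) (a i).
Proof.
move=> w_ge0 w1; rewrite /dot; under [X in _ <= X]eq_bigr do rewrite mulr_sumr.
rewrite exchange_big /=; apply: ler_sum => c _.
rewrite summxE (eq_bigr (fun k => w k * a k ord0 c)) => [|k _]; last by rewrite mxE.
rewrite -expr2; apply: le_trans (sqr_wmean_le _ w_ge0 w1) _.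
by apply: ler_sum => i _; rewrite expr2.
Qed.

End DotProduct.

Section Gradient.
Variables (R : realType) (Omega : finType) (d : nat).
Variables (mu : Omega -> R) (f : Omega -> 'rV[R]_d -> R).

Lemma is_derive_Fobj w v : (forall z, derivable (f z) w v) ->
  is_derive w v (Fobj mu f) (\sum_z mu z *: 'D_v (f z) w).
Proof.
move=> df; have -> : Fobj mu f = \sum_z mu z \*: f z by rewrite fct_sumE.
elim/big_ind2: _ => [|g dg h dh g_dg h_dh|z _]; first exact: is_derive_cst.
  exact: is_deriveD.
by have := derivableP (df z); apply: is_deriveZ.
Qed.

Lemma grad_Fobj w : (forall z, differentiable (f z) w) ->
  grad (Fobj mu f) w = \sum_z mu z *: grad (f z) w.
Proof.
move=> df; apply/rowP => i; rewrite !mxE summxE; under [RHS]eq_bigr do rewrite !mxE.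
by have [_ ->] := is_derive_Fobj (fun z => @diff_derivable _ _ _ _ _ (delta_mx ord0 i) (df z)).
Qed.

End Gradient.

Lemma dot_sum_pair_sum (R : realType) (Omega : finType) d (h : Omega -> 'rV[R]_d) s :
  dot (\sum_(x <- s) h x) (\sum_(x <- s) h x) = pair_sum (fun x y => dot (h x) (h y)) s.
Proof.
elim: s => [|x s IH]; first by rewrite big_nil /dot big1 // => i _; rewrite mxE mul0r.
rewrite big_cons /= dotDl !dotDr IH dot_sumr (dotC _ (h x)) dot_sumr; ring.
Qed.

Lemma sumr_subr_cst (V : zmodType) (I : Type) (s : seq I) (a : I -> V) m :
  \sum_(x <- s) (a x - m) = \sum_(x <- s) a x - m *+ size s.
Proof.
elim: s => [|x s IH]; first by rewrite !big_nil subr0.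
by rewrite !big_cons IH mulrSr opprD addrACA (addrC (- m)).
Qed.

Section SampleMean.
Variables (R : realType) (Omega : finType) (P : Omega -> Omega -> R) (mu : Omega -> R).
Hypotheses (Pst : is_stochastic P) (mu_stat : is_stationary P mu).
Variables (d : nat) (a : Omega -> 'rV[R]_d) (G : R).
Hypothesis a_le : forall x, enorm (a x) <= G.

Let m := \sum_u mu u *: a u.
Let h x := a x - m.

Lemma dot_centered_le x : dot (h x) (h x) <= 4 * G ^+ 2.
Proof.
have [[mu_ge0 mu1] _] := mu_stat.
have G_ge0 : 0 <= G by apply: le_trans (a_le x); apply: enorm_ge0.
have aa y : dot (a y) (a y) <= G ^+ 2 by rewrite -enorm_sqr lerXn2r ?nnegrE ?enorm_ge0.
have mm : dot m m <= G ^+ 2.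
  apply: le_trans (dot_wmean_le _ mu_ge0 mu1) _.
  apply: le_trans (ler_sum _ (fun u _ => ler_wpM2l (mu_ge0 u) (aa u))) _.
  by rewrite -mulr_suml mu1 mul1r.
by apply: le_trans (dot_subr_le _ _) _; have := aa x; lra.
Qed.

Lemma dot_centered_mean x : \sum_y mu y * dot (h x) (h y) = 0.
Proof.
have [[_ mu1] _] := mu_stat.
under eq_bigr do rewrite -dotZr; rewrite -dot_sumr.
have -> : \sum_y mu y *: h y = 0.
  by rewrite /h; under eq_bigr do rewrite scalerBr; rewrite sumrB -scaler_suml mu1 scale1r subrr.
by rewrite /dot big1 // => i _; rewrite !mxE mulr0.
Qed.

Variable tau : nat.
Hypothesis mix_tau : l1_mix P mu tau <= 2^-1.

Lemma Echain_sample_mean_err_le q N : is_distr q -> (0 < N)%N ->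
  Echain P q N (fun s => enorm (N%:R^-1 *: \sum_(x <- s) a x - m) ^+ 2)
    <= 32 * G ^+ 2 * tau%:R / N%:R.
Proof.
move=> q_distr N_gt0; have N_neq0 : N%:R != 0 :> R by rewrite pnatr_eq0 -lt0n.
pose kap x y := dot (h x) (h y).
have mean_err s : size s = N ->
    enorm (N%:R^-1 *: \sum_(x <- s) a x - m) ^+ 2 = N%:R^-2 * pair_sum kap s.
  move=> s_N; have -> : N%:R^-1 *: \sum_(x <- s) a x - m = N%:R^-1 *: \sum_(x <- s) h x.
    rewrite /h sumr_subr_cst s_N scalerBr -scalerMnr scalerMnl.
    by rewrite -[N%:R^-1 *+ N]mulr_natr mulVf ?scale1r.
  by rewrite enorm_sqr dotZl dotZr dot_sum_pair_sum mulrA -expr2 exprVn.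
have G2_ge0 : 0 <= 4 * G ^+ 2 by rewrite mulr_ge0 ?sqr_ge0.
have kap_le x y : `|kap x y| <= 4 * G ^+ 2.
  apply: le_trans (abs_dot_le _ _) _.
  by have := dot_centered_le x; have := dot_centered_le y; lra.
have := Echain_pair_sum_le Pst G2_ge0 dot_centered_mean kap_le N q_distr.
have N2_ge0 : 0 <= N%:R ^- 2 :> R by rewrite invr_ge0 exprn_ge0.
rewrite (@eq_Echain _ _ P q N _ _ mean_err) EchainZ => /(ler_wpM2l N2_ge0)/le_trans; apply.
rewrite [N%:R ^- 2 * _]mulrA.
apply: le_trans (ler_wpM2l _ (sum_l1_mix_le Pst mu_stat mix_tau N)) _.
  by rewrite mulr_ge0 ?invr_ge0 ?exprn_ge0 // mulr_ge0 // mulr_ge0.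
by rewrite [X in X <= _](_ : _ = 32 * G ^+ 2 * tau%:R / N%:R) //; field.
Qed.

End SampleMean.

Lemma ler_sum_subset_uniq (R : numDomainType) (T : eqType) (s t : seq T) (F : T -> R) :
  uniq s -> uniq t -> {subset s <= t} -> (forall x, 0 <= F x) ->
  \sum_(x <- s) F x <= \sum_(x <- t) F x.
Proof.
move=> s_uniq t_uniq st F_ge0.
have s_t : perm_eq s [seq x <- t | x \in s].
  apply: uniq_perm => //; first exact: filter_uniq.
  by move=> x; rewrite mem_filter; case: (boolP (x \in s)) => // /st ->.
rewrite (perm_big _ s_t) big_filter [X in _ <= X](bigID (mem s)) /=.
by rewrite lerDl sumr_ge0.
Qed.

Section GeometricTimes.
Variable R : realType.

Lemma Nprob_ge0 m (j : {ffun 'I_m -> nat}) : 0 <= Nprob R j.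
Proof. by apply: prodr_ge0 => i _; rewrite invr_ge0 exprn_ge0. Qed.

Lemma sum_Nprob_le1 m (s : seq {ffun 'I_m -> nat}) : uniq s -> \sum_(j <- s) Nprob R j <= 1.
Proof.
move=> s_uniq; pose K := (\sum_(j <- s) \sum_i j i).+1.
have j_lt_K j i : j \in s -> (j i < K)%N.
  by move=> js; rewrite ltnS (big_rem _ js) /= (bigD1 i) //= -addnA leq_addr.
pose g (b : {ffun 'I_m -> 'I_K}) : {ffun 'I_m -> nat} := [ffun i => val (b i)].
have g_inj : injective g.
  by move=> b1 b2 /ffunP g12; apply/ffunP => i; apply: val_inj; have := g12 i; rewrite !ffunE.
apply: le_trans (ler_sum_subset_uniq (t := map g (enum {ffun 'I_m -> 'I_K})) _ _ _ _) _ => //.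
- by rewrite map_inj_uniq ?enum_uniq.
- move=> j js; apply/mapP; exists [ffun i => Ordinal (j_lt_K j i js)]; first by rewrite mem_enum.
  by apply/ffunP => i; rewrite !ffunE.
- exact: Nprob_ge0.
rewrite big_map big_enum /= /Nprob; under eq_bigr do under eq_bigr do rewrite ffunE.
rewrite -(bigA_distr_bigA (fun i (k : 'I_K) => (2 ^+ k.+1 : R)^-1)).
apply: prodr_ile1 => i _; rewrite sumr_ge0 => [|k _]; last by rewrite invr_ge0 exprn_ge0.
under eq_bigr do rewrite exprS invfM -exprVn.
by apply: le_trans (@sum_geometric_half_le R 2^-1 K _) _; rewrite ?invr_ge0 ?divff.
Qed.

End GeometricTimes.

Lemma is_distr_exists_pos (R : realType) (Omega : finType) (p : Omega -> R) :
  is_distr p -> exists x, 0 < p x.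
Proof.
move=> [_ p1]; case: (pickP (fun x => 0 < p x)) => [x px | p_le0]; first by exists x.
have : \sum_x p x <= 0 by apply: sumr_le0 => x _; rewrite leNgt p_le0.
by rewrite p1 ler10.
Qed.

Section Expectation.
Variables (R : realType) (Omega : finType) (P : Omega -> Omega -> R) (p0 : Omega -> R).
Hypotheses (Pst : is_stochastic P) (p0_distr : is_distr p0).

Lemma expect_le m L X (B : R) : 0 <= B ->
  (forall j, \sum_(z : {ffun 'I_(L j) -> Omega}) path_prob p0 P z * X j z <= B) ->
  (expect p0 P m L X <= B%:E)%E.
Proof.
move=> B_ge0 EX_le; apply: ge_ereal_sup => _ [A [A_fin _] <-].
rewrite fsumEFin // lee_fin fsbig_finite //=.
apply: le_trans (ler_sum _ (fun j _ => ler_wpM2l (@Nprob_ge0 R _ j) (EX_le j))) _.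
by rewrite -mulr_suml ler_piMl ?sum_Nprob_le1 ?finmap.fset_uniq.
Qed.

(* The last [N] states after the first [S j] form a fresh chain run started
   from the law of the next state, whatever the prefix. *)
Lemma expect_window_le m (S : {ffun 'I_m -> nat} -> nat) N
    (Y : {ffun 'I_m -> nat} -> seq Omega -> R) (B : R) :
  (forall j s, 0 <= Y j s) ->
  (forall j pre q, size pre = S j -> is_distr q ->
     Echain P q N (fun win => Y j (pre ++ win)) <= B) ->
  (expect p0 P m (fun j => (S j + N)%N) (fun j z => Y j (val (fgraph z))) <= B%:E)%E.
Proof.
move=> Y_ge0 window_le; have [x0 _] := is_distr_exists_pos p0_distr.
have B_ge0 : 0 <= B.
  apply: le_trans (window_le [ffun=> 0%N] _ p0 (size_nseq _ x0) p0_distr).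
  exact: Echain_ge0.
apply: expect_le => // j; rewrite sum_path_probE Echain_cat -(Echain_cst Pst (S j) B p0_distr).
apply: ler_Echain => //; first by case: p0_distr.
by move=> pre pre_S; apply: window_le => //; apply: next_law_distr.
Qed.

End Expectation.

Section GradientWindow.
Variables (R : realType) (Omega : finType) (P : Omega -> Omega -> R) (mu : Omega -> R).
Hypotheses (Pst : is_stochastic P) (mu_stat : is_stationary P mu).
Variables (d : nat) (f : Omega -> 'rV[R]_d -> R) (G : R).
Hypothesis f_diff : forall z w, differentiable (f z) w.
Variable (w : seq Omega -> 'rV[R]_d).
Hypothesis grad_le : forall z s, enorm (grad (f z) (w s)) <= G.

(* [g_t^N - grad F(w_t)] read off the path, [S] being the number of samples before [w_t]. *)
Definition window_grad_err S N (s : seq Omega) : R :=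
  enorm (N%:R^-1 *: \sum_(x <- drop S s) grad (f x) (w (take S s))
         - grad (Fobj mu f) (w (take S s))).

Variable tau : nat.
Hypothesis mix_tau : l1_mix P mu tau <= 2^-1.

Lemma Echain_window_grad_err_sqr_le pre q N : is_distr q -> (0 < N)%N ->
  Echain P q N (fun win => window_grad_err (size pre) N (pre ++ win) ^+ 2)
    <= 32 * G ^+ 2 * tau%:R / N%:R.
Proof.
move=> q_distr N_gt0.
pose a x := grad (f x) (w pre).
have err_cat win : window_grad_err (size pre) N (pre ++ win) =
    enorm (N%:R^-1 *: \sum_(x <- win) a x - \sum_u mu u *: a u).
  by rewrite /window_grad_err take_size_cat // drop_size_cat // grad_Fobj.
under eq_Echain => win _ do rewrite err_cat.
by apply: Echain_sample_mean_err_le => // x; apply: grad_le.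
Qed.

End GradientWindow.

Lemma ceil_two_log2_ge1 (R : realType) (T : nat) : (2 <= T)%N ->
  1 <= (Num.ceil (2 * (ln (T%:R : R) / ln 2)))%:~R :> R.
Proof.
move=> T_ge2; have lnT_gt0 : 0 < ln (T%:R : R) by rewrite ln_gt0 // ltr1n.
have ln2_gt0 : 0 < ln (2 : R) by rewrite ln_gt0 // ltr1n.
have : 0 < Num.ceil (2 * (ln (T%:R : R) / ln 2)).
  by rewrite -(ltr0z R); apply: lt_le_trans (ceil_ge _); rewrite mulr_gt0 ?divr_gt0.
by rewrite ler1z -gtz0_ge1.
Qed.

Lemma mix_rate_le (R : realType) (G t K N : R) : 0 <= G -> 0 <= t -> t <= K -> 0 < N ->
  32 * G ^+ 2 * t / N <= 32 * (G ^+ 2 * K / N) /\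
  32 * G ^+ 2 * t / N <= (32 * (G * Num.sqrt (K / N))) ^+ 2.
Proof.
move=> G_ge0 t_ge0 t_le_K N_gt0.
have rate_K : 32 * G ^+ 2 * t / N <= 32 * (G ^+ 2 * K / N).
  have GN_ge0 : 0 <= 32 * (G ^+ 2 / N) by rewrite mulr_ge0 ?divr_ge0 ?sqr_ge0 ?ltW.
  have -> : 32 * G ^+ 2 * t / N = 32 * (G ^+ 2 / N) * t by ring.
  have -> : 32 * (G ^+ 2 * K / N) = 32 * (G ^+ 2 / N) * K by ring.
  exact: ler_wpM2l.
split => //; apply: le_trans rate_K _.
have KN_ge0 : 0 <= K / N by rewrite divr_ge0 ?(le_trans t_ge0 t_le_K) ?(ltW N_gt0).
rewrite !exprMn sqr_sqrtr // -mulrA.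
by have := mulr_ge0 (sqr_ge0 G) KN_ge0; lra.
Qed.

Theorem lemmaA6 :
  exists (c a : nat),
  forall (R : realType) (Omega : finType) (P : Omega -> Omega -> R)
    (p0 mu : Omega -> R) (tau : nat) (d : nat) (Kset : set 'rV[R]_d)
    (f : Omega -> 'rV[R]_d -> R) (G : R) (T N t : nat)
    (W : seq nat -> seq Omega -> 'rV[R]_d),
    ergodic P -> is_distr p0 -> is_stationary P mu -> is_tau_mix P mu tau ->
    (forall z w, differentiable (f z) w) ->
    (forall w z, Kset w -> enorm (grad (f z) w) <= G) ->
    (2 <= T)%N -> (1 <= N <= T)%N -> (1 <= t)%N ->
    (forall ns zs, Kset (W ns zs)) ->
    let m := t.-1 in
    let K : R := tau%:R * (Num.ceil (2 * (ln (T%:R : R) / ln 2)))%:~R in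
    let polylog : R := ln (T%:R + K + N%:R + 2) ^+ a in
    let err := fun (j : {ffun 'I_m -> nat}) (z : {ffun 'I_(Ssum j + N) -> Omega}) =>
      enorm (g_tN f W N j z - grad (Fobj mu f) (w_t W j z)) in
    (expect p0 P m (fun j => (Ssum j + N)%N) err
       <= (c%:R * (G * Num.sqrt (K / N%:R)) * polylog)%:E)%E /\
    (expect p0 P m (fun j => (Ssum j + N)%N) (fun j z => (err j z ^+ 2)%R)
       <= (c%:R * (G ^+ 2 * K / N%:R) * polylog)%:E)%E.
Proof.
exists 32%N, 0%N => R Omega P p0 mu tau d Kset f G T N t W [Pst _] p0_distr mu_stat
  tau_mix f_diff grad_le T_ge2 /andP[N_gt0 _] _ W_in m K polylog err.
rewrite /polylog expr0 !mulr1.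
have mix_tau := l1_mix_tau tau_mix.
have [z0 _] := is_distr_exists_pos p0_distr.
have G_ge0 : 0 <= G by apply: le_trans (grad_le _ z0 (W_in [::] [::])); apply: enorm_ge0.
have tau_le_K : tau%:R <= K by rewrite ler_peMr ?ceil_two_log2_ge1.
have N_pos : (0 : R) < N%:R by rewrite ltr0n.
have [rate_K rate_sqrt] := mix_rate_le G_ge0 (ler0n R tau) tau_le_K N_pos.
pose Y (j : {ffun 'I_m -> nat}) := window_grad_err mu f (W (Ns j)) (Ssum j) N.
have Y_sqr_le j pre q : size pre = Ssum j -> is_distr q ->
    Echain P q N (fun win => Y j (pre ++ win) ^+ 2) <= 32 * G ^+ 2 * tau%:R / N%:R.
  rewrite /Y => <- q_distr; apply: Echain_window_grad_err_sqr_le => // z s.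
  exact/grad_le/W_in.
split; [apply: (expect_window_le Pst p0_distr (Y := Y))
       | apply: (expect_window_le Pst p0_distr (Y := fun j s => Y j s ^+ 2))].
- by move=> j s; apply: enorm_ge0.
- move=> j pre q pre_S q_distr; apply: Echain_le_sqr; rewrite ?mulr_ge0 ?sqrtr_ge0 //.
  exact: le_trans (Y_sqr_le j pre q pre_S q_distr) rate_sqrt.
- by move=> j s; apply: sqr_ge0.
- by move=> j pre q pre_S q_distr; apply: le_trans (Y_sqr_le j pre q pre_S q_distr) rate_K.
Qed.
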